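(* Assume in addition $1\le M\le N/2$. For every $y$ such that either ($Py\equiv0\pmod N$ and $y\ne0$) or ($Py\not\equiv0\pmod N$ and $MPy\not\equiv0\pmod N$), one has $$\frac{N}{4M}\cdot\frac{N}{N-M}\;\ge\;\frac{\Pr_{\mathrm{Amp}}(y)}{\Pr_{\mathrm{QFT}}(y)}\;\ge\;\frac{N}{4M}\cdot\frac{N}{N-M}\Big(1-\frac{2M}{N}\Big)^2,\qquad \frac{N}{2M}\cdot\frac{N}{N-M}\;\ge\;\frac{\Pr_{\mathrm{Amp}}(y)}{\Pr_{\mathrm{QHS}}(y)}\;\ge\;\frac{N}{2M}\cdot\frac{N}{N-M}\Big(1-\frac{2M}{N}\Big)^2,$$ and in fact $\Pr_{\mathrm{Amp}}(y)/\Pr_{\mathrm{QFT}}(y)=\frac{N^2}{4M^2}\tan^2\theta\sin^2(2k\theta)$ and $\Pr_{\mathrm{Amp}}(y)/\Pr_{\mathrm{QHS}}(y)=\frac{N^2}{2M^2}\tan^2\theta\sin^2(2k\theta)$. Consequently, for any nonempty set $S$ of such $y$, the same two chains of inequalities hold with $\Pr(y)$ replaced by $\Pr(S)=\sum_{y\in S}\Pr(y)$ for each algorithm.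
   Context: Setting: $N\ge 2$, $\mathcal L=\{0,\dots,N-1\}$, integers $s\ge0,P\ge1,M\ge1$ with $M<N$ and $s+(M-1)P\le N-1$; $A=\{s+rP:r=0,\dots,M-1\}$; $\omega=e^{-2\pi i/N}$; $f=\mathbf 1_A$. Let $\sin\theta=\sqrt{M/N}$, $\theta\in(0,\pi/2)$, $k=\lfloor\pi/(4\theta)\rfloor$, $a_k=\frac{\sin((2k+1)\theta)}{\sqrt M}$, $b_k=\frac{\cos((2k+1)\theta)}{\sqrt{N-M}}$. Define $\Pr_{\mathrm{Amp}}(y)=\big|\frac1{\sqrt N}\sum_z\psi_k(z)\omega^{zy}\big|^2$ where $\psi_k=a_k$ on $A$ and $b_k$ off $A$; $\Pr_{\mathrm{QFT}}(y)=\big|\frac1N\sum_z(-1)^{f(z)}\omega^{zy}\big|^2$; $\Pr_{\mathrm{QHS}}(y)=\frac1{N^2}\big|\sum_{x\in A}\omega^{xy}\big|^2+\frac1{N^2}\big|\sum_{x\notin A}\omega^{xy}\big|^2$. *)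

From Stdlib Require Import Reals Lra Lia ZArith Arith List.
Open Scope R_scope.

Definition lsum (l : list nat) (f : nat -> R) : R :=
  fold_right Rplus 0 (map f l).

Definition Lset (N : nat) : list nat := seq 0 N.

Definition inA (s P M z : nat) : bool :=
  existsb (fun r => Nat.eqb z (s + r * P)%nat) (seq 0 M).

(* Real and imaginary parts of sum_{z in l} c z * omega^(z y),
   omega = exp(-2 pi i / N), c real-valued. *)
Definition dftRe (N : nat) (l : list nat) (c : nat -> R) (y : nat) : R :=
  lsum l (fun z => c z * cos (2 * PI * INR z * INR y / INR N)).
Definition dftIm (N : nat) (l : list nat) (c : nat -> R) (y : nat) : R :=
  lsum l (fun z => c z * (- sin (2 * PI * INR z * INR y / INR N))).
Definition sqnorm_dft (N : nat) (l : list nat) (c : nat -> R) (y : nat) : R :=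
  (dftRe N l c y) ^ 2 + (dftIm N l c y) ^ 2.

Definition theta (N M : nat) : R := asin (sqrt (INR M / INR N)).
Definition kk (N M : nat) : Z := Int_part (PI / (4 * theta N M)).
Definition a_k (N M : nat) : R :=
  sin ((2 * IZR (kk N M) + 1) * theta N M) / sqrt (INR M).
Definition b_k (N M : nat) : R :=
  cos ((2 * IZR (kk N M) + 1) * theta N M) / sqrt (INR N - INR M).
Definition psi_k (N s P M : nat) (z : nat) : R :=
  if inA s P M z then a_k N M else b_k N M.

Definition PrAmp (N s P M y : nat) : R :=
  (dftRe N (Lset N) (psi_k N s P M) y / sqrt (INR N)) ^ 2
  + (dftIm N (Lset N) (psi_k N s P M) y / sqrt (INR N)) ^ 2.

Definition PrQFT (N s P M y : nat) : R :=
  (dftRe N (Lset N) (fun z => if inA s P M z then -1 else 1) y / INR N) ^ 2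
  + (dftIm N (Lset N) (fun z => if inA s P M z then -1 else 1) y / INR N) ^ 2.

Definition PrQHS (N s P M y : nat) : R :=
  / (INR N) ^ 2 * sqnorm_dft N (filter (inA s P M) (Lset N)) (fun _ => 1) y
  + / (INR N) ^ 2
      * sqnorm_dft N (filter (fun z => negb (inA s P M z)) (Lset N)) (fun _ => 1) y.

Definition PrSet (Pr : nat -> R) (S : list nat) : R := lsum S Pr.

Definition good_y (N P M y : nat) : Prop :=
  ((P * y) mod N = 0 /\ y <> 0)%nat \/
  ((P * y) mod N <> 0 /\ (M * P * y) mod N <> 0)%nat.

From Stdlib Require Import Reals Lra Lia ZArith Arith List.
Open Scope R_scope.

(* The sum of [omega^(zy)] over all [z < N] vanishes for [0 < y < N], so the
   transform of a function taking the value [a] on [A] and [b] off [A] is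
   [(a - b)] times the transform [S(y)] of the indicator of [A].  Hence
   [Pr_QFT = 4|S|^2/N^2], [Pr_QHS = 2|S|^2/N^2] and [Pr_Amp = (a_k - b_k)^2 |S|^2/N],
   so both ratios are constants independent of [y].  As [A] is an arithmetic
   progression, [|S(y)|^2] is a Fejer-kernel value, positive under the
   condition on [y].  Finally [N (a_k - b_k)^2 / 4 = N^2/(4M(N-M)) sin^2(2k theta)],
   and the choice of [k] puts [2k theta] in [(PI/2 - 2 theta, PI/2]], whence
   [(1 - 2M/N)^2 = cos^2(2 theta) <= sin^2(2k theta) <= 1]. *)

Lemma lsum_app l1 l2 f : lsum (l1 ++ l2) f = lsum l1 f + lsum l2 f.
Proof. unfold lsum; induction l1; simpl; [ring | rewrite IHl1; ring]. Qed.

Lemma lsum_ext l f g : (forall x, In x l -> f x = g x) -> lsum l f = lsum l g.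
Proof.
  unfold lsum; induction l as [|x l IH]; simpl; intros H; auto.
  rewrite H, IH; auto.
Qed.

Lemma lsum_scal l c f : lsum l (fun z => c * f z) = c * lsum l f.
Proof. unfold lsum; induction l; simpl; [ring | rewrite IHl; ring]. Qed.

Lemma lsum_opp l f : lsum l (fun z => - f z) = - lsum l f.
Proof. unfold lsum; induction l; simpl; [ring | rewrite IHl; ring]. Qed.

Lemma lsum_plus l f g : lsum l (fun z => f z + g z) = lsum l f + lsum l g.
Proof. unfold lsum; induction l; simpl; [ring | rewrite IHl; ring]. Qed.

Lemma lsum_const l c : lsum l (fun _ => c) = INR (length l) * c.
Proof.
  unfold lsum; induction l; simpl length; [simpl; ring|].
  rewrite S_INR; simpl; rewrite IHl; ring.
Qed.

Lemma lsum_if l (p : nat -> bool) a b g :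
  lsum l (fun z => (if p z then a else b) * g z) =
  a * lsum (filter p l) g + b * lsum (filter (fun z => negb (p z)) l) g.
Proof.
  unfold lsum; induction l as [|x l IH]; simpl; [ring|].
  destruct (p x); simpl; rewrite IH; ring.
Qed.

Lemma lsum_filter l (p : nat -> bool) g :
  lsum (filter p l) g = lsum l (fun z => if p z then g z else 0).
Proof.
  unfold lsum; induction l as [|x l IH]; simpl; [ring|].
  destruct (p x); simpl; rewrite IH; ring.
Qed.

Lemma lsum_filter_negb_of_sum0 l (p : nat -> bool) g : lsum l g = 0 ->
  lsum (filter (fun z => negb (p z)) l) g = - lsum (filter p l) g.
Proof.
  intros H0; rewrite <- (Rplus_0_l (- _)), <- H0, !lsum_filter, <- lsum_opp,
    <- lsum_plus.
  apply lsum_ext; intros z _; destruct (p z); simpl; ring.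
Qed.

Lemma lsum_if_of_sum0 l (p : nat -> bool) a b g : lsum l g = 0 ->
  lsum l (fun z => (if p z then a else b) * g z) = (a - b) * lsum (filter p l) g.
Proof. intros H0; rewrite lsum_if, lsum_filter_negb_of_sum0 by exact H0; ring. Qed.

Lemma lsum_pos l f : l <> nil -> (forall x, In x l -> 0 < f x) -> 0 < lsum l f.
Proof.
  unfold lsum; induction l as [|a [|b l] IH]; intros Hn H; [congruence| |].
  - simpl; rewrite Rplus_0_r; apply H; simpl; auto.
  - change (0 < f a + fold_right Rplus 0 (map f (b :: l))).
    assert (0 < f a) by (apply H; simpl; auto).
    assert (0 < fold_right Rplus 0 (map f (b :: l)))
      by (apply IH; [congruence | intros; apply H; simpl; auto]).
    lra.
Qed.

Lemma lsum_ratio l f g r : l <> nil ->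
  (forall x, In x l -> 0 < g x /\ f x = r * g x) -> lsum l f / lsum l g = r.
Proof.
  intros Hn H.
  assert (Hg : 0 < lsum l g) by (apply lsum_pos; [|intros x Hx; apply H]; auto).
  rewrite (lsum_ext _ f (fun x => r * g x)), lsum_scal by (intros x Hx; apply H, Hx).
  field; lra.
Qed.
Lemma lsum_cos_progression th h M :
  2 * sin h * lsum (seq 0 M) (fun r => cos (th + INR r * (2 * h)))
  = sin (th + INR M * (2 * h) - h) - sin (th - h).
Proof.
  induction M as [|M IH].
  - unfold lsum; simpl; rewrite Rmult_0_l, Rplus_0_r; ring.
  - rewrite seq_S, lsum_app, Rmult_plus_distr_l, IH, S_INR; unfold lsum; simpl.
    replace (th + (INR M + 1) * (2 * h) - h) with (th + INR M * (2 * h) + h) by ring.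
    rewrite sin_plus, sin_minus; ring.
Qed.

Lemma lsum_sin_progression th h M :
  2 * sin h * lsum (seq 0 M) (fun r => sin (th + INR r * (2 * h)))
  = cos (th - h) - cos (th + INR M * (2 * h) - h).
Proof.
  induction M as [|M IH].
  - unfold lsum; simpl; rewrite Rmult_0_l, Rplus_0_r; ring.
  - rewrite seq_S, lsum_app, Rmult_plus_distr_l, IH, S_INR; unfold lsum; simpl.
    replace (th + (INR M + 1) * (2 * h) - h) with (th + INR M * (2 * h) + h) by ring.
    rewrite cos_plus, (cos_minus (th + INR M * (2 * h)) h); ring.
Qed.

Lemma progression_sqnorm th h M :
  let C := lsum (seq 0 M) (fun r => cos (th + INR r * (2 * h))) in
  let S := lsum (seq 0 M) (fun r => sin (th + INR r * (2 * h))) in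
  (2 * sin h) ^ 2 * (C ^ 2 + S ^ 2) = 2 - 2 * cos (INR M * (2 * h)).
Proof.
  intros C S.
  replace ((2 * sin h) ^ 2 * (C ^ 2 + S ^ 2))
    with ((2 * sin h * C) ^ 2 + (2 * sin h * S) ^ 2) by ring.
  unfold C, S; rewrite lsum_cos_progression, lsum_sin_progression.
  set (u := th + INR M * (2 * h) - h); set (v := th - h).
  replace (INR M * (2 * h)) with (u - v) by (unfold u, v; ring).
  rewrite cos_minus.
  pose proof (sin2_cos2 u); pose proof (sin2_cos2 v); unfold Rsqr in *; nra.
Qed.

Lemma progression_sqnorm_pos th h M : cos (INR M * (2 * h)) < 1 ->
  0 < lsum (seq 0 M) (fun r => cos (th + INR r * (2 * h))) ^ 2
      + lsum (seq 0 M) (fun r => sin (th + INR r * (2 * h))) ^ 2.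
Proof.
  intros Hcos; pose proof (progression_sqnorm th h M) as E; cbv zeta in E.
  set (Q := _ ^ 2 + _ ^ 2) in E |- *.
  assert (0 <= Q) by (unfold Q; nra).
  destruct (Rle_lt_or_eq_dec 0 Q) as [|HQ]; auto.
  rewrite <- HQ, Rmult_0_r in E; lra.
Qed.

Lemma progression_sqnorm_periodic th q M :
  lsum (seq 0 M) (fun r => cos (th + INR r * (2 * (INR q * PI)))) ^ 2
  + lsum (seq 0 M) (fun r => sin (th + INR r * (2 * (INR q * PI)))) ^ 2 = INR M ^ 2.
Proof.
  assert (Hk : forall r, INR r * (2 * (INR q * PI)) = 2 * INR (r * q) * PI)
    by (intros r; rewrite mult_INR; ring).
  rewrite (lsum_ext _ _ (fun _ => cos th)) by (intros r _; rewrite Hk; apply cos_period).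
  rewrite (lsum_ext _ (fun r => sin _) (fun _ => sin th))
    by (intros r _; rewrite Hk; apply sin_period).
  rewrite !lsum_const, length_seq.
  pose proof (sin2_cos2 th); unfold Rsqr in *; nra.
Qed.

Lemma sin_PI_frac_pos m N : (0 < m < N)%nat -> 0 < sin (PI * INR m / INR N).
Proof.
  intros Hm.
  assert (0 < INR m) by (apply lt_0_INR; lia).
  assert (INR m < INR N) by (apply lt_INR; lia).
  pose proof PI_RGT_0.
  apply sin_gt_0.
  - apply Rdiv_lt_0_compat; [apply Rmult_lt_0_compat|]; lra.
  - apply Rmult_lt_reg_r with (INR N); [lra|].
    unfold Rdiv; rewrite Rmult_assoc, Rinv_l by lra; nra.
Qed.

Lemma cos_lt_1_of_mod_neq0 N m : (0 < N)%nat -> (m mod N <> 0)%nat ->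
  cos (2 * PI * INR m / INR N) < 1.
Proof.
  intros HN Hm.
  assert (HNr : 0 < INR N) by (apply lt_0_INR; lia).
  pose proof (Nat.div_mod m N ltac:(lia)) as E.
  pose proof (Nat.mod_upper_bound m N ltac:(lia)).
  replace (2 * PI * INR m / INR N)
    with (2 * (PI * INR (m mod N) / INR N) + 2 * INR (m / N) * PI)
    by (rewrite E at 3; rewrite plus_INR, mult_INR; field; lra).
  rewrite cos_period, cos_2a_sin.
  pose proof (sin_PI_frac_pos (m mod N) N ltac:(lia)); nra.
Qed.

Section RootsOfUnity.
Variables N y : nat.
Hypothesis hy : (0 < y < N)%nat.

Let h := PI * INR y / INR N.

Let angle_eq z : 2 * PI * INR z * INR y / INR N = 0 + INR z * (2 * h).
Proof. unfold h; field; apply not_0_INR; lia. Qed.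

Let full_turn : 0 + INR N * (2 * h) - h = - h + 2 * INR y * PI.
Proof. unfold h; field; apply not_0_INR; lia. Qed.

Lemma lsum_cos_roots_of_unity :
  lsum (seq 0 N) (fun z => cos (2 * PI * INR z * INR y / INR N)) = 0.
Proof.
  assert (0 < sin h) by apply (sin_PI_frac_pos y N hy).
  pose proof (lsum_cos_progression 0 h N) as T.
  rewrite full_turn, sin_period, Rminus_0_l in T.
  rewrite (lsum_ext _ _ (fun z => cos (0 + INR z * (2 * h)))) by (intros; rewrite angle_eq; auto).
  apply Rmult_eq_reg_l with (2 * sin h); lra.
Qed.

Lemma lsum_sin_roots_of_unity :
  lsum (seq 0 N) (fun z => sin (2 * PI * INR z * INR y / INR N)) = 0.
Proof.
  assert (0 < sin h) by apply (sin_PI_frac_pos y N hy).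
  pose proof (lsum_sin_progression 0 h N) as T.
  rewrite full_turn, cos_period, Rminus_0_l in T.
  rewrite (lsum_ext _ _ (fun z => sin (0 + INR z * (2 * h)))) by (intros; rewrite angle_eq; auto).
  apply Rmult_eq_reg_l with (2 * sin h); lra.
Qed.

End RootsOfUnity.

Lemma inA_S s P M z :
  inA s P (S M) z = (inA s P M z || Nat.eqb z (s + M * P))%bool.
Proof. unfold inA; rewrite seq_S, existsb_app; simpl; rewrite Bool.orb_false_r; reflexivity. Qed.

Lemma inA_lt s P M z : (1 <= P)%nat -> inA s P M z = true -> (z < s + M * P)%nat.
Proof.
  intros HP H; unfold inA in H; apply existsb_exists in H.
  destruct H as [r [Hr Hz]]; apply in_seq in Hr; apply Nat.eqb_eq in Hz; nia.
Qed.

Lemma lsum_eqb t n g : (t < n)%nat ->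
  lsum (seq 0 n) (fun z => if Nat.eqb z t then g z else 0) = g t.
Proof.
  induction n as [|n IH]; intros Ht; [lia|].
  rewrite seq_S, lsum_app; unfold lsum at 2; simpl.
  destruct (Nat.eqb_spec n t) as [<-|Hne].
  - rewrite (lsum_ext _ _ (fun _ => 0)), lsum_const; [ring|].
    intros x Hx; apply in_seq in Hx; destruct (Nat.eqb_spec x n); [lia | auto].
  - rewrite IH by lia; ring.
Qed.

Lemma lsum_filter_inA s P M N g : (1 <= P)%nat ->
  (forall r, (r < M)%nat -> (s + r * P < N)%nat) ->
  lsum (filter (inA s P M) (seq 0 N)) g = lsum (seq 0 M) (fun r => g (s + r * P)%nat).
Proof.
  intros HP; rewrite lsum_filter; induction M as [|M IH]; intros H.
  - rewrite (lsum_ext _ _ (fun _ => 0)), lsum_const; [unfold lsum; simpl; ring | auto].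
  - rewrite (lsum_ext _ _ (fun z => (if inA s P M z then g z else 0)
                                 + (if Nat.eqb z (s + M * P) then g z else 0))).
    + rewrite lsum_plus, IH, lsum_eqb by (try apply H; intros; try apply H; lia).
      rewrite seq_S, lsum_app; unfold lsum at 3; simpl; ring.
    + intros x _; rewrite inA_S; destruct (inA s P M x) eqn:E; simpl; [|ring].
      apply inA_lt in E; auto; destruct (Nat.eqb_spec x (s + M * P)); [lia | ring].
Qed.

Lemma sqnorm_dft_progression_pos N s P M y :
  (0 < N)%nat -> (1 <= P)%nat -> (1 <= M)%nat -> (s + (M - 1) * P <= N - 1)%nat ->
  ((P * y) mod N = 0 \/ (M * P * y) mod N <> 0)%nat ->
  0 < sqnorm_dft N (filter (inA s P M) (Lset N)) (fun _ => 1) y.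
Proof.
  intros HN HP HM HA Hy.
  assert (HNr : 0 < INR N) by (apply lt_0_INR; lia).
  set (th := 2 * PI * INR s * INR y / INR N).
  set (h := PI * INR P * INR y / INR N).
  assert (Hangle : forall r, 2 * PI * INR (s + r * P) * INR y / INR N = th + INR r * (2 * h))
    by (intros r; unfold th, h; rewrite plus_INR, mult_INR; field; lra).
  unfold sqnorm_dft, dftRe, dftIm, Lset.
  rewrite !lsum_filter_inA by (auto; intros; nia).
  rewrite (lsum_ext _ _ (fun r => cos (th + INR r * (2 * h))))
    by (intros; rewrite Hangle; ring).
  rewrite (lsum_ext _ (fun r => 1 * - sin _) (fun r => - sin (th + INR r * (2 * h))))
    by (intros; rewrite Hangle; ring).
  rewrite lsum_opp, <- (Rsqr_pow2 (- _)), <- Rsqr_neg, Rsqr_pow2.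
  destruct Hy as [Hy | Hy].
  - pose proof (Nat.div_mod (P * y) N ltac:(lia)) as E.
    rewrite Hy, Nat.add_0_r in E; set (q := (P * y / N)%nat) in E.
    replace h with (INR q * PI)
      by (unfold h; rewrite Rmult_assoc, <- mult_INR, E, mult_INR; field; lra).
    rewrite progression_sqnorm_periodic; apply pow_lt, lt_0_INR; lia.
  - apply progression_sqnorm_pos.
    replace (INR M * (2 * h)) with (2 * PI * INR (M * P * y) / INR N)
      by (unfold h; rewrite !mult_INR; field; lra).
    apply cos_lt_1_of_mod_neq0; auto.
Qed.

Section TwoValuedDFT.
Variables N y : nat.
Hypothesis hy : (0 < y < N)%nat.

Lemma dftRe_two_valued (p : nat -> bool) a b :
  dftRe N (Lset N) (fun z => if p z then a else b) y
  = (a - b) * dftRe N (filter p (Lset N)) (fun _ => 1) y.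
Proof.
  unfold dftRe, Lset; rewrite lsum_if_of_sum0 by exact (lsum_cos_roots_of_unity N y hy).
  f_equal; apply lsum_ext; intros; ring.
Qed.

Lemma dftIm_two_valued (p : nat -> bool) a b :
  dftIm N (Lset N) (fun z => if p z then a else b) y
  = (a - b) * dftIm N (filter p (Lset N)) (fun _ => 1) y.
Proof.
  unfold dftIm, Lset; rewrite lsum_if_of_sum0.
  - f_equal; apply lsum_ext; intros; ring.
  - rewrite lsum_opp, (lsum_sin_roots_of_unity N y hy); ring.
Qed.

Lemma sqnorm_dft_filter_negb (p : nat -> bool) :
  sqnorm_dft N (filter (fun z => negb (p z)) (Lset N)) (fun _ => 1) y
  = sqnorm_dft N (filter p (Lset N)) (fun _ => 1) y.
Proof.
  unfold sqnorm_dft, dftRe, dftIm, Lset; rewrite !lsum_filter_negb_of_sum0; [ring| |].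
  - rewrite (lsum_ext _ _ (fun z => - sin (2 * PI * INR z * INR y / INR N)))
      by (intros; ring).
    rewrite lsum_opp, (lsum_sin_roots_of_unity N y hy); ring.
  - rewrite (lsum_ext _ _ (fun z => cos (2 * PI * INR z * INR y / INR N)))
      by (intros; ring).
    exact (lsum_cos_roots_of_unity N y hy).
Qed.

End TwoValuedDFT.

Definition amp_gain (N M : nat) : R := INR N * (a_k N M - b_k N M) ^ 2 / 4.

Section ProbabilityRatios.
Variables N s P M y : nat.
Hypothesis hy : (0 < y < N)%nat.

Let Q := sqnorm_dft N (filter (inA s P M) (Lset N)) (fun _ => 1) y.

Let HNr : 0 < INR N.
Proof. apply lt_0_INR; lia. Qed.

Lemma PrQHS_eq : PrQHS N s P M y = 2 * Q / INR N ^ 2.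
Proof.
  unfold PrQHS; rewrite (sqnorm_dft_filter_negb N y hy); fold Q; field; lra.
Qed.

Lemma PrQFT_eq : PrQFT N s P M y = 4 * Q / INR N ^ 2.
Proof.
  unfold PrQFT; rewrite (dftRe_two_valued N y hy), (dftIm_two_valued N y hy).
  unfold Q, sqnorm_dft; field; lra.
Qed.

Lemma PrAmp_eq : PrAmp N s P M y = (a_k N M - b_k N M) ^ 2 * Q / INR N.
Proof.
  unfold PrAmp, psi_k; rewrite (dftRe_two_valued N y hy), (dftIm_two_valued N y hy).
  assert (0 < sqrt (INR N)) by (apply sqrt_lt_R0; lra).
  pose proof (pow2_sqrt (INR N) ltac:(lra)) as Hsqrt; set (r := sqrt (INR N)) in *.
  rewrite <- Hsqrt; unfold Q, sqnorm_dft; field; lra.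
Qed.

Lemma PrQFT_eq_PrQHS : PrQFT N s P M y = 2 * PrQHS N s P M y.
Proof. rewrite PrQFT_eq, PrQHS_eq; field; lra. Qed.

Lemma PrAmp_eq_gain_PrQFT : PrAmp N s P M y = amp_gain N M * PrQFT N s P M y.
Proof. rewrite PrAmp_eq, PrQFT_eq; unfold amp_gain; field; lra. Qed.

Lemma PrQHS_pos : (1 <= P)%nat -> (1 <= M)%nat -> (s + (M - 1) * P <= N - 1)%nat ->
  ((P * y) mod N = 0 \/ (M * P * y) mod N <> 0)%nat -> 0 < PrQHS N s P M y.
Proof.
  intros HP HM HA Hy; rewrite PrQHS_eq.
  pose proof (sqnorm_dft_progression_pos N s P M y ltac:(lia) HP HM HA Hy).
  apply Rdiv_lt_0_compat; [unfold Q; lra | apply pow_lt; lra].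
Qed.

End ProbabilityRatios.

(* With [k = floor (PI / (4 t))], the angle [2 k t] lies in [(PI/2 - 2t, PI/2]]. *)
Lemma cos_2_le_sin_2_floor t : 0 < t -> t <= PI / 4 ->
  cos (2 * t) <= sin (2 * IZR (Int_part (PI / (4 * t))) * t).
Proof.
  intros Ht0 Ht.
  set (K := IZR (Int_part (PI / (4 * t)))).
  destruct (base_Int_part (PI / (4 * t))) as [Hk1 Hk2]; fold K in Hk1, Hk2.
  assert (Hquot : PI / (4 * t) * (4 * t) = PI) by (field; lra).
  assert (Hup : 4 * K * t <= PI).
  { rewrite <- Hquot; replace (4 * K * t) with (K * (4 * t)) by ring.
    apply Rmult_le_compat_r; lra. }
  assert (Hlow : PI - 4 * t < 4 * K * t).
  { rewrite <- Hquot at 1; replace (4 * K * t) with ((K + 1) * (4 * t) - 4 * t) by ring.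
    apply Rplus_lt_compat_r, Rmult_lt_compat_r; lra. }
  rewrite <- sin_shift; apply sin_incr_1; lra.
Qed.

Section Theta.
Variables N M : nat.
Hypotheses (hM : (1 <= M)%nat) (hMN : (2 * M <= N)%nat).

Let HN : 0 < INR N.
Proof. apply lt_0_INR; lia. Qed.

Let HM : 0 < INR M.
Proof. apply lt_0_INR; lia. Qed.

Let HMN : 2 * INR M <= INR N.
Proof. replace 2 with (INR 2) by reflexivity; rewrite <- mult_INR; apply le_INR; lia. Qed.

Let ratio_bound : -1 <= sqrt (INR M / INR N) <= 1.
Proof.
  split; [pose proof (sqrt_pos (INR M / INR N)); lra|].
  rewrite <- sqrt_1; apply sqrt_le_1_alt.
  apply Rmult_le_reg_r with (INR N); [lra|].
  unfold Rdiv; rewrite Rmult_assoc, Rinv_l; lra.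
Qed.

Lemma sin_theta : sin (theta N M) = sqrt (INR M) / sqrt (INR N).
Proof. unfold theta; rewrite sin_asin by exact ratio_bound; apply sqrt_div; lra. Qed.

Lemma cos_theta : cos (theta N M) = sqrt (INR N - INR M) / sqrt (INR N).
Proof.
  unfold theta; rewrite cos_asin by exact ratio_bound; rewrite <- sqrt_div by lra.
  f_equal; rewrite Rsqr_sqrt; [field; lra|].
  apply Rmult_le_pos; [lra | left; apply Rinv_0_lt_compat; lra].
Qed.

Lemma cos_2theta : cos (2 * theta N M) = 1 - 2 * INR M / INR N.
Proof.
  rewrite cos_2a_sin, Rmult_assoc, sin_theta.
  replace (sqrt (INR M) / sqrt (INR N) * (sqrt (INR M) / sqrt (INR N)))
    with (sqrt (INR M) ^ 2 / sqrt (INR N) ^ 2)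
    by (field; apply Rgt_not_eq, sqrt_lt_R0; lra).
  rewrite !pow2_sqrt by lra; field; lra.
Qed.

Lemma theta_pos : 0 < theta N M.
Proof.
  pose proof PI_RGT_0; pose proof (asin_bound (sqrt (INR M / INR N))).
  destruct (Rlt_or_le 0 (theta N M)) as [|Hle]; auto.
  assert (0 <= sin (- theta N M)) by (apply sin_ge_0; unfold theta in *; lra).
  rewrite sin_neg, sin_theta in H1.
  assert (0 < sqrt (INR M) / sqrt (INR N))
    by (apply Rdiv_lt_0_compat; apply sqrt_lt_R0; lra).
  lra.
Qed.

Lemma theta_le_PI4 : theta N M <= PI / 4.
Proof.
  pose proof PI_RGT_0; pose proof (asin_bound (sqrt (INR M / INR N))).
  destruct (Rle_or_lt (2 * theta N M) (PI / 2)) as [|Hlt]; [lra|].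
  assert (cos (2 * theta N M) < 0) by (apply cos_lt_0; unfold theta in *; lra).
  rewrite cos_2theta in H1.
  assert (2 * INR M / INR N <= 1)
    by (apply Rmult_le_reg_r with (INR N); [lra|]; unfold Rdiv;
        rewrite Rmult_assoc, Rinv_l; lra).
  lra.
Qed.

Lemma tan_theta_sq : tan (theta N M) ^ 2 = INR M / (INR N - INR M).
Proof.
  unfold tan; rewrite sin_theta, cos_theta.
  assert (0 < sqrt (INR N)) by (apply sqrt_lt_R0; lra).
  assert (0 < sqrt (INR N - INR M)) by (apply sqrt_lt_R0; lra).
  replace (_ ^ 2) with (sqrt (INR M) ^ 2 / sqrt (INR N - INR M) ^ 2) by (field; lra).
  rewrite !pow2_sqrt; lra.
Qed.

Lemma amp_gain_eq : amp_gain N M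
  = INR N / (4 * INR M) * (INR N / (INR N - INR M)) * sin (2 * IZR (kk N M) * theta N M) ^ 2.
Proof.
  set (t := theta N M); set (x := (2 * IZR (kk N M) + 1) * t).
  assert (Hsin : sin (2 * IZR (kk N M) * t) = sin x * cos t - cos x * sin t)
    by (rewrite <- sin_minus; f_equal; unfold x; ring).
  unfold amp_gain, a_k, b_k; fold t x; rewrite Hsin; unfold t; rewrite sin_theta, cos_theta.
  pose proof (pow2_sqrt (INR N) ltac:(lra)) as EN.
  pose proof (pow2_sqrt (INR M) ltac:(lra)) as EM.
  pose proof (pow2_sqrt (INR N - INR M) ltac:(lra)) as EL.
  assert (0 < sqrt (INR N)) by (apply sqrt_lt_R0; lra).
  assert (0 < sqrt (INR M)) by (apply sqrt_lt_R0; lra).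
  assert (0 < sqrt (INR N - INR M)) by (apply sqrt_lt_R0; lra).
  set (rN := sqrt (INR N)) in *; set (rM := sqrt (INR M)) in *;
    set (rL := sqrt (INR N - INR M)) in *.
  rewrite <- EL, <- EM, <- EN; field; lra.
Qed.

Lemma sin_2k_theta_sq_bounds :
  (1 - 2 * INR M / INR N) ^ 2 <= sin (2 * IZR (kk N M) * theta N M) ^ 2 <= 1.
Proof.
  pose proof (cos_2_le_sin_2_floor (theta N M) theta_pos theta_le_PI4) as H.
  fold (kk N M) in H; rewrite cos_2theta in H.
  pose proof (SIN_bound (2 * IZR (kk N M) * theta N M)).
  assert (0 <= 1 - 2 * INR M / INR N)
    by (apply Rmult_le_reg_r with (INR N); [lra|]; unfold Rminus, Rdiv;
        rewrite Rmult_plus_distr_r, Ropp_mult_distr_l_reverse, Rmult_assoc, Rinv_l; lra).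
  split; nra.
Qed.

End Theta.

Lemma good_y_spec N P M y : good_y N P M y ->
  (0 < y)%nat /\ ((P * y) mod N = 0 \/ (M * P * y) mod N <> 0)%nat.
Proof.
  intros [[H Hy] | [H H']]; split; auto; [lia|].
  destruct y; [rewrite Nat.mul_0_r, Nat.Div0.mod_0_l in H; lia | lia].
Qed.

Theorem mainTheorem4 (N s P M : nat)
  (hN : (2 <= N)%nat) (hP : (1 <= P)%nat) (hM1 : (1 <= M)%nat) (hMN : (M < N)%nat)
  (hA : (s + (M - 1) * P <= N - 1)%nat)
  (hM2 : (2 * M <= N)%nat) :
  let c := INR N / (4 * INR M) * (INR N / (INR N - INR M)) in
  let d := INR N / (2 * INR M) * (INR N / (INR N - INR M)) in
  let e := (1 - 2 * INR M / INR N) ^ 2 in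
  (forall y : nat, (y < N)%nat -> good_y N P M y ->
     c >= PrAmp N s P M y / PrQFT N s P M y /\
     PrAmp N s P M y / PrQFT N s P M y >= c * e /\
     d >= PrAmp N s P M y / PrQHS N s P M y /\
     PrAmp N s P M y / PrQHS N s P M y >= d * e /\
     PrAmp N s P M y / PrQFT N s P M y
       = INR N ^ 2 / (4 * INR M ^ 2) * (tan (theta N M)) ^ 2
         * (sin (2 * IZR (kk N M) * theta N M)) ^ 2 /\
     PrAmp N s P M y / PrQHS N s P M y
       = INR N ^ 2 / (2 * INR M ^ 2) * (tan (theta N M)) ^ 2
         * (sin (2 * IZR (kk N M) * theta N M)) ^ 2) /\
  (forall S : list nat, S <> nil -> NoDup S ->
     (forall y, In y S -> (y < N)%nat /\ good_y N P M y) ->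
     c >= PrSet (PrAmp N s P M) S / PrSet (PrQFT N s P M) S /\
     PrSet (PrAmp N s P M) S / PrSet (PrQFT N s P M) S >= c * e /\
     d >= PrSet (PrAmp N s P M) S / PrSet (PrQHS N s P M) S /\
     PrSet (PrAmp N s P M) S / PrSet (PrQHS N s P M) S >= d * e).
Proof.
  intros c d e.
  assert (HN : 0 < INR N) by (apply lt_0_INR; lia).
  assert (HM : 0 < INR M) by (apply lt_0_INR; lia).
  assert (HMN : INR M < INR N) by (apply lt_INR; lia).
  set (g := amp_gain N M); set (sk2 := sin (2 * IZR (kk N M) * theta N M) ^ 2).
  assert (Hg : g = c * sk2) by exact (amp_gain_eq N M hM1 hM2).
  assert (Hc : 0 < c) by (unfold c; apply Rmult_lt_0_compat; apply Rdiv_lt_0_compat; lra).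
  assert (Hsk2 : e <= sk2 <= 1) by exact (sin_2k_theta_sq_bounds N M hM1 hM2).
  assert (Hgain : c * e <= g <= c) by (rewrite Hg; split; nra).
  assert (Hd : d = 2 * c) by (unfold c, d; field; lra).
  assert (Hratios : forall y, (y < N)%nat -> good_y N P M y ->
    (0 < PrQFT N s P M y /\ PrAmp N s P M y = g * PrQFT N s P M y) /\
    (0 < PrQHS N s P M y /\ PrAmp N s P M y = 2 * g * PrQHS N s P M y)).
  { intros y Hy Hgood; destruct (good_y_spec N P M y Hgood) as [Hy0 Hmod].
    pose proof (PrQHS_pos N s P M y (conj Hy0 Hy) hP hM1 hA Hmod).
    rewrite (PrAmp_eq_gain_PrQFT N s P M y (conj Hy0 Hy)),
      (PrQFT_eq_PrQHS N s P M y (conj Hy0 Hy)).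
    unfold g; repeat split; lra. }
  split.
  - intros y Hy Hgood; destruct (Hratios y Hy Hgood) as [[H1 E1] [H2 E2]].
    assert (R1 : PrAmp N s P M y / PrQFT N s P M y = g) by (rewrite E1; field; lra).
    assert (R2 : PrAmp N s P M y / PrQHS N s P M y = 2 * g) by (rewrite E2; field; lra).
    rewrite R1, R2, Hd, tan_theta_sq by assumption.
    repeat split; try lra; rewrite Hg; unfold c, sk2; field; lra.
  - intros S Hne _ HS; unfold PrSet.
    rewrite (lsum_ratio S _ _ g), (lsum_ratio S _ _ (2 * g)), Hd by
      (auto; intros y Hy; destruct (HS y Hy) as [Hy1 Hy2]; apply (Hratios y Hy1 Hy2)).
    repeat split; lra.
Qed.
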